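(* For every integer $d \geq 1$ there exist a strictly increasing sequence $(a_n)_{n\geq1}$ of positive integers and a constant $c > 0$ such that $$\frac{a_{n+1}}{a_n} > 1 + \frac{c}{a_n^{1/d}} \qquad \text{for all } n \in \mathbb{N},$$ and such that for almost all $\alpha \in \mathbb{R}$ the discrepancy $D_N$ of $(\{a_n\alpha\})_{n\geq1}$ satisfies $N D_N = O\big((\log N)^{2+\varepsilon}\big)$ as $N\to\infty$, for every $\varepsilon > 0$.
   Context: For real $x$, $\{x\}$ denotes the fractional part of $x$. For a sequence $(x_n)_{n\ge1}$ in $[0,1)$, its discrepancy is $$D_N = \sup_{0 \leq a < b \leq 1} \left| \frac{A_N([a,b))}{N} - (b-a) \right|, \qquad A_N([a,b)) = \#\{1 \leq n \leq N : x_n \in [a,b)\}.$$ *)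

From Stdlib Require Import Reals Lra Lia.
Open Scope R_scope.

Fixpoint count_in (x : nat -> R) (a b : R) (N : nat) : nat :=
  match N with
  | O => O
  | S M => (count_in x a b M +
            (if Rle_dec a (x (S M)) then
               if Rlt_dec (x (S M)) b then 1 else 0
             else 0))%nat
  end.

Lemma count_in_le x a b N : (count_in x a b N <= N)%nat.
Proof.
  induction N as [|N IH]; simpl; [lia|].
  destruct (Rle_dec a (x (S N))); [destruct (Rlt_dec (x (S N)) b)|]; lia.
Qed.

Definition disc_set (x : nat -> R) (N : nat) (v : R) : Prop :=
  exists a b, 0 <= a < b /\ b <= 1 /\
    v = Rabs (INR (count_in x a b N) / INR N - (b - a)).

Lemma ratio_01 x a b N : 0 <= INR (count_in x a b N) / INR N <= 1.
Proof.
  destruct N as [|N].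
  - simpl. unfold Rdiv. rewrite Rmult_0_l. lra.
  - pose proof (count_in_le x a b (S N)) as H.
    apply le_INR in H. pose proof (pos_INR (count_in x a b (S N))).
    assert (0 < INR (S N)) by (apply lt_0_INR; lia).
    split.
    + unfold Rdiv; apply Rmult_le_pos; [lra| left; apply Rinv_0_lt_compat; lra].
    + apply (Rmult_le_reg_r (INR (S N))); [lra|].
      unfold Rdiv. rewrite Rmult_assoc, Rinv_l by lra. lra.
Qed.

Lemma disc_set_bound x N : bound (disc_set x N).
Proof.
  exists 1. intros v [a [b [Hab [Hb ->]]]].
  pose proof (ratio_01 x a b N). apply Rabs_le. lra.
Qed.

Lemma disc_set_ne x N : exists v, disc_set x N v.
Proof. exists (Rabs (INR (count_in x 0 1 N) / INR N - (1 - 0))), 0, 1. repeat split; lra. Qed.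

Definition discrepancy (x : nat -> R) (N : nat) : R :=
  proj1_sig (completeness (disc_set x N) (disc_set_bound x N) (disc_set_ne x N)).

(* Lebesgue-null subset of R: coverable by countably many intervals of
   arbitrarily small total length. *)
Definition null_set (S : R -> Prop) : Prop :=
  forall eps, 0 < eps ->
    exists l u : nat -> R,
      (forall k, l k <= u k) /\
      (forall y, S y -> exists k, l k <= y <= u k) /\
      (forall n, sum_f_R0 (fun k => u k - l k) n <= eps).

From Stdlib Require Import Reals Lra Lia ZArith List Permutation.
From Stdlib Require Import Classical IndefiniteDescription Cantor.
Open Scope R_scope.

(* Split the indices into blocks [B_j <= n < B_(j+1)], [B_j = 2^(2^j - 1)] ([block_start]), and
   let [a_n = t_j n] on block [j], with [t_j = B_(j+1)^(d-1)] ([block_mult]). Then [a_n >= n^d], so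
   the gap [t_j = a_n / n] gives the growth condition. On block [j] the points [{a_n alpha}] are the
   rotation by [t_j alpha]. If [t_j alpha] is badly approximable with weight
   [w_j = (j+1)^2 2^(j+2)] ([dioph_weight]) by fractions of denominator at most [B_(j+1)], the
   Dirichlet-Ostrowski recursion bounds the counting error on any stretch of block [j] by
   [4 w_j log_2 B_(j+1) = O(j^3 4^j)]; summing over the blocks below [N] gives
   [O((log N)^2 (log log N)^3)]. In a unit interval the [alpha] failing the condition at level [j]
   have measure [O(1/j^2)], so by Borel-Cantelli almost every [alpha] fails it only finitely
   often. *)

Definition block_start (j : nat) : nat := (2 ^ (2 ^ j - 1))%nat.

Definition block_mult (d j : nat) : nat := (block_start (S j) ^ (d - 1))%nat.

Definition block_index (n : nat) : nat := Nat.log2 (Nat.log2 n + 1).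

Definition lac_seq (d n : nat) : nat := (block_mult d (block_index n) * n)%nat.

Lemma block_start_pos j : (1 <= block_start j)%nat.
Proof. unfold block_start. pose proof (Nat.pow_nonzero 2 (2 ^ j - 1)). lia. Qed.

Lemma block_start_le i j : (i <= j)%nat -> (block_start i <= block_start j)%nat.
Proof.
  intros H. unfold block_start. apply Nat.pow_le_mono_r; [lia|].
  pose proof (Nat.pow_le_mono_r 2 i j). lia.
Qed.

Lemma block_mult_pos d j : (1 <= block_mult d j)%nat.
Proof.
  unfold block_mult. pose proof (block_start_pos (S j)).
  pose proof (Nat.pow_nonzero (block_start (S j)) (d - 1)). lia.
Qed.

Lemma block_mult_le d i j : (i <= j)%nat -> (block_mult d i <= block_mult d j)%nat.
Proof. intros H. apply Nat.pow_le_mono_l, block_start_le. lia. Qed.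

Lemma block_index_spec n : (1 <= n)%nat ->
  (block_start (block_index n) <= n < block_start (S (block_index n)))%nat.
Proof.
  intros Hn. unfold block_index, block_start.
  set (k := Nat.log2 n).
  destruct (Nat.log2_spec n) as [H1 H2]; [lia|].
  destruct (Nat.log2_spec (k + 1)) as [H3 H4]; [lia|].
  set (j := Nat.log2 (k + 1)) in *. fold k in H1, H2.
  rewrite Nat.pow_succ_r' in H4 |- *. clearbody k j.
  split.
  - eapply Nat.le_trans; [|apply H1]. apply Nat.pow_le_mono_r; lia.
  - eapply Nat.lt_le_trans; [apply H2|]. apply Nat.pow_le_mono_r; lia.
Qed.

Lemma block_index_le n m : (n <= m)%nat -> (block_index n <= block_index m)%nat.
Proof.
  intros H. apply Nat.log2_le_mono.
  pose proof (Nat.log2_le_mono n m H). lia.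
Qed.

Lemma block_index_eq j n : (block_start j <= n < block_start (S j))%nat -> block_index n = j.
Proof.
  intros Hn. pose proof (block_start_pos j).
  destruct (block_index_spec n ltac:(lia)) as [A B].
  destruct (Nat.lt_total (block_index n) j) as [Hl|[He|Hl]]; auto.
  - pose proof (block_start_le (S (block_index n)) j ltac:(lia)). lia.
  - pose proof (block_start_le (S j) (block_index n) ltac:(lia)). lia.
Qed.

Lemma lac_seq_step d n : (lac_seq d n + block_mult d (block_index n) <= lac_seq d (S n))%nat.
Proof.
  unfold lac_seq.
  pose proof (block_mult_le d _ _ (block_index_le n (S n) ltac:(lia))).
  pose proof (Nat.mul_le_mono_r _ _ (S n) H). lia.
Qed.

Lemma lac_seq_pos d n : (1 <= n)%nat -> (0 < lac_seq d n)%nat.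
Proof. intros. unfold lac_seq. pose proof (block_mult_pos d (block_index n)). nia. Qed.

Lemma lac_seq_lt d n : (lac_seq d n < lac_seq d (S n))%nat.
Proof. pose proof (lac_seq_step d n). pose proof (block_mult_pos d (block_index n)). lia. Qed.

Lemma pow_le_lac_seq d n : (1 <= d)%nat -> (1 <= n)%nat -> (n ^ d <= lac_seq d n)%nat.
Proof.
  intros Hd Hn. unfold lac_seq, block_mult.
  destruct (block_index_spec n Hn) as [_ H].
  replace d with (S (d - 1)) at 1 by lia. rewrite Nat.pow_succ_r', (Nat.mul_comm n).
  apply Nat.mul_le_mono_r, Nat.pow_le_mono_l. lia.
Qed.

Lemma le_Rpower_inv_pow (n : nat) (d : nat) (A : R) : (1 <= d)%nat -> (1 <= n)%nat ->
  INR n ^ d <= A -> INR n <= Rpower A (1 / INR d).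
Proof.
  intros Hd Hn HA.
  assert (Hdr : 1 <= INR d) by (apply (le_INR 1); lia).
  assert (Hnr : 0 < INR n) by (apply lt_0_INR; lia).
  replace (INR n) with (Rpower (INR n ^ d) (1 / INR d)).
  2:{ rewrite <- Rpower_pow, Rpower_mult by lra.
      replace (INR d * (1 / INR d)) with 1 by (field; lra). apply Rpower_1; lra. }
  apply Rle_Rpower_l.
  - apply Rlt_le, Rdiv_lt_0_compat; lra.
  - split; [apply pow_lt; lra | exact HA].
Qed.

Lemma lac_seq_growth d n : (1 <= d)%nat -> (1 <= n)%nat ->
  INR (lac_seq d (S n)) / INR (lac_seq d n) >
  1 + (1 / 2) / Rpower (INR (lac_seq d n)) (1 / INR d).
Proof.
  intros Hd Hn.
  set (A := lac_seq d n). set (t := block_mult d (block_index n)).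
  assert (HAr : 0 < INR A) by (apply lt_0_INR, lac_seq_pos; lia).
  assert (Hnr : 1 <= INR n) by (apply (le_INR 1); lia).
  assert (Ht : 1 <= INR t) by (apply (le_INR 1), block_mult_pos).
  assert (HAtn : INR A = INR t * INR n) by (unfold A, lac_seq; rewrite mult_INR; reflexivity).
  set (x := Rpower (INR A) (1 / INR d)).
  assert (Hx : INR n <= x).
  { apply le_Rpower_inv_pow; [lia|lia|]. rewrite <- pow_INR. apply le_INR, pow_le_lac_seq; lia. }
  assert (Hst : INR A + INR t <= INR (lac_seq d (S n)))
    by (rewrite <- plus_INR; apply le_INR, lac_seq_step).
  apply Rlt_gt, Rlt_le_trans with (1 + INR t / INR A).
  - apply Rplus_lt_compat_l. rewrite HAtn.
    apply (Rmult_lt_reg_r (x * (INR t * INR n))); [apply Rmult_lt_0_compat; nra|].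
    field_simplify; nra.
  - apply (Rmult_le_reg_r (INR A)); [lra|]. field_simplify; lra.
Qed.

Definition lsum {A : Type} (f : A -> R) (l : list A) : R :=
  fold_right (fun i acc => f i + acc) 0 l.

Section ListSums.
Context {A : Type}.
Implicit Types (f g : A -> R) (l : list A).

Lemma lsum_app f l1 l2 : lsum f (l1 ++ l2) = lsum f l1 + lsum f l2.
Proof. induction l1; simpl; [lra|]. rewrite IHl1; lra. Qed.

Lemma lsum_ext f g l : (forall i, In i l -> f i = g i) -> lsum f l = lsum g l.
Proof. induction l; simpl; intros H; [lra|]. rewrite H, IHl by auto. reflexivity. Qed.

Lemma lsum_le f g l : (forall i, In i l -> f i <= g i) -> lsum f l <= lsum g l.
Proof.
  induction l; simpl; intros H; [lra|].
  pose proof (H a (or_introl eq_refl)). pose proof (IHl (fun i Hi => H i (or_intror Hi))). lra.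
Qed.

Lemma lsum_plus f g l : lsum (fun i => f i + g i) l = lsum f l + lsum g l.
Proof. induction l; simpl; [lra|]. rewrite IHl; lra. Qed.

Lemma lsum_minus f g l : lsum (fun i => f i - g i) l = lsum f l - lsum g l.
Proof. induction l; simpl; [lra|]. rewrite IHl; lra. Qed.

Lemma lsum_const c l : lsum (fun _ => c) l = INR (length l) * c.
Proof. induction l; simpl length; simpl lsum; [simpl; lra|]. rewrite IHl, S_INR; lra. Qed.

Lemma lsum_perm f l1 l2 : Permutation l1 l2 -> lsum f l1 = lsum f l2.
Proof. induction 1; simpl; lra. Qed.

Lemma lsum_map {B : Type} (f : B -> R) (g : A -> B) l :
  lsum f (map g l) = lsum (fun x => f (g x)) l.
Proof. induction l; simpl; [lra|]. rewrite IHl; lra. Qed.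

Lemma lsum_bounds01 f l : (forall i, 0 <= f i <= 1) -> 0 <= lsum f l <= INR (length l).
Proof.
  intros H. induction l; simpl lsum; simpl length; [simpl; lra|].
  rewrite S_INR. pose proof (H a). lra.
Qed.

Lemma lsum_nonneg f l : (forall x, 0 <= f x) -> 0 <= lsum f l.
Proof. intros H. induction l; simpl; [lra|]. pose proof (H a). lra. Qed.

Lemma lsum_incl f l l' : (forall x, 0 <= f x) ->
  NoDup l -> incl l l' -> lsum f l <= lsum f l'.
Proof.
  intros Hf. revert l'. induction l as [|a l IH]; intros l' Hnd Hinc.
  - apply lsum_nonneg; auto.
  - inversion Hnd; subst.
    destruct (in_split a l' (Hinc a (or_introl eq_refl))) as [l1 [l2 ->]].
    rewrite (lsum_perm f (l1 ++ a :: l2) (a :: l1 ++ l2)) by (symmetry; apply Permutation_middle).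
    simpl. apply Rplus_le_compat_l, IH; auto.
    intros x Hx. assert (Hx' : In x (l1 ++ a :: l2)) by (apply Hinc; right; auto).
    apply in_app_or in Hx'. apply in_or_app. destruct Hx' as [H|[H|H]]; auto. subst. contradiction.
Qed.

End ListSums.

Lemma lsum_list_prod (g : nat -> nat -> R) l1 l2 :
  lsum (fun p => g (fst p) (snd p)) (list_prod l1 l2) = lsum (fun i => lsum (g i) l2) l1.
Proof. induction l1; simpl; [lra|]. rewrite lsum_app, IHl1, lsum_map. reflexivity. Qed.

Lemma sum_f_R0_lsum f n : sum_f_R0 f n = lsum f (seq 0 (S n)).
Proof.
  induction n; [simpl; lra|].
  rewrite tech5, IHn, (seq_S (S n) 0), lsum_app. simpl. lra.
Qed.

Definition ind_lt (y c : R) : R := if Rlt_dec y c then 1 else 0.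

Lemma ind_lt_bounds y c : 0 <= ind_lt y c <= 1.
Proof. unfold ind_lt; destruct Rlt_dec; lra. Qed.

Definition count_below (x : nat -> R) (c : R) (s N : nat) : R :=
  lsum (fun n => ind_lt (x n) c) (seq (S s) N).

Lemma count_below_add x c s N1 N2 :
  count_below x c s (N1 + N2) = count_below x c s N1 + count_below x c (s + N1) N2.
Proof. unfold count_below. rewrite seq_app, lsum_app. reflexivity. Qed.

Lemma count_below_bounds x c s N : 0 <= count_below x c s N <= INR N.
Proof.
  unfold count_below.
  pose proof (lsum_bounds01 (fun n => ind_lt (x n) c) (seq (S s) N) (fun n => ind_lt_bounds _ _)).
  rewrite length_seq in H. exact H.
Qed.

Lemma count_below_error_le x c s N : 0 <= c <= 1 ->
  Rabs (count_below x c s N - INR N * c) <= INR N.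
Proof.
  intros Hc. pose proof (count_below_bounds x c s N). pose proof (pos_INR N).
  apply Rabs_le. split; nra.
Qed.

Lemma count_below_ext x y c s N :
  (forall r, (1 <= r <= N)%nat -> x (s + r)%nat = y (s + r)%nat) ->
  count_below x c s N = count_below y c s N.
Proof.
  intros H. apply lsum_ext. intros i Hi. apply in_seq in Hi.
  replace i with (s + (i - s))%nat by lia. rewrite H by lia. reflexivity.
Qed.

Lemma count_in_count_below x a b N : a <= b ->
  INR (count_in x a b N) = count_below x b 0 N - count_below x a 0 N.
Proof.
  intros Hab. induction N as [|N IH]; [unfold count_below; simpl; lra|].
  replace (S N) with (N + 1)%nat at 2 3 by lia.
  rewrite !count_below_add. unfold count_below at 2 4. simpl count_in. simpl seq.
  rewrite plus_INR, IH. simpl lsum. unfold ind_lt.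
  destruct (Rle_dec a (x (S N))); [destruct (Rlt_dec (x (S N)) b)|];
  destruct (Rlt_dec (x (S N)) b); destruct (Rlt_dec (x (S N)) a); simpl; lra.
Qed.

(* Counts in [[a, b)] are differences of counts in [[0, c)]. *)
Lemma discrepancy_le x N E : (1 <= N)%nat ->
  (forall c, 0 <= c <= 1 -> Rabs (count_below x c 0 N - INR N * c) <= E) ->
  INR N * discrepancy x N <= 2 * E.
Proof.
  intros HN HE.
  assert (HNr : 1 <= INR N) by (apply (le_INR 1); lia).
  unfold discrepancy. destruct (completeness _ _ _) as [D [Hub Hlub]]. simpl.
  assert (HD : D <= 2 * E / INR N).
  { apply Hlub. intros v [a [b [Hab [Hb ->]]]].
    rewrite count_in_count_below by lra.
    pose proof (HE a ltac:(lra)). pose proof (HE b ltac:(lra)).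
    replace ((count_below x b 0 N - count_below x a 0 N) / INR N - (b - a)) with
      (((count_below x b 0 N - INR N * b) - (count_below x a 0 N - INR N * a)) / INR N)
      by (field; lra).
    unfold Rdiv. rewrite Rabs_mult, (Rabs_right (/ INR N))
      by (apply Rle_ge, Rlt_le, Rinv_0_lt_compat; lra).
    apply Rmult_le_compat_r; [apply Rlt_le, Rinv_0_lt_compat; lra|].
    eapply Rle_trans; [apply Rabs_triang|]. rewrite Rabs_Ropp. lra. }
  apply (Rmult_le_compat_l (INR N)) in HD; [|lra].
  replace (INR N * (2 * E / INR N)) with (2 * E) in HD by (field; lra). exact HD.
Qed.

Lemma Int_part_shift (x : R) (z : Z) : Int_part (x + IZR z) = (Int_part x + z)%Z.
Proof. symmetry. apply Int_part_spec. pose proof (base_Int_part x). rewrite plus_IZR. lra. Qed.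

Lemma frac_part_shift (x : R) (z : Z) : frac_part (x + IZR z) = frac_part x.
Proof. unfold frac_part. rewrite Int_part_shift, plus_IZR. ring. Qed.

Lemma frac_part_eq y (z : Z) : IZR z <= y < IZR z + 1 -> frac_part y = y - IZR z.
Proof. intros H. unfold frac_part. do 2 f_equal. symmetry. apply Int_part_spec. lra. Qed.

Lemma frac_part_frac_add x e : frac_part (x + e) = frac_part (frac_part x + e).
Proof.
  replace (frac_part x + e) with ((x + e) + IZR (- Int_part x))
    by (unfold frac_part; rewrite opp_IZR; ring).
  symmetry. apply frac_part_shift.
Qed.

Lemma ind_lt_frac_part y c : 0 <= c <= 1 ->
  ind_lt (frac_part y) c = IZR (Int_part y - Int_part (y - c)).
Proof.
  intros Hc. unfold ind_lt, frac_part. pose proof (base_Int_part y).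
  destruct Rlt_dec.
  - replace (Int_part (y - c)) with (Int_part y - 1)%Z.
    + replace (Int_part y - (Int_part y - 1))%Z with 1%Z by ring. reflexivity.
    + apply Int_part_spec. rewrite minus_IZR. simpl. lra.
  - replace (Int_part (y - c)) with (Int_part y).
    + rewrite Z.sub_diag. reflexivity.
    + apply Int_part_spec. lra.
Qed.

Lemma lsum_indicator_ge q L :
  lsum (fun i => if le_dec L i then 1 else 0) (seq 0 q) = INR (q - L).
Proof.
  induction q; [reflexivity|].
  rewrite seq_S, lsum_app, IHq. unfold lsum. simpl fold_right. destruct (le_dec L q).
  - replace (S q - L)%nat with (S (q - L)) by lia. rewrite S_INR. lra.
  - replace (S q - L)%nat with (q - L)%nat by lia. lra.
Qed.

(* With [m = floor (q f)], exactly the last [m] of the points [f + i/q] reach [1]. *)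
Lemma Int_part_add_grid (k : Z) (f : R) (q m i : nat) : 0 <= f < 1 ->
  INR m <= INR q * f < INR m + 1 -> (i < q)%nat ->
  Int_part (IZR k + f + INR i / INR q) = (k + if le_dec (q - m) i then 1 else 0)%Z.
Proof.
  intros Hf Hm Hi. symmetry. apply Int_part_spec.
  assert (Hqr : 1 <= INR q) by (apply (le_INR 1); lia).
  assert (Hir : INR i + 1 <= INR q) by (rewrite <- S_INR; apply le_INR; lia).
  assert (Hiq : INR i / INR q < 1) by (apply (Rmult_lt_reg_r (INR q)); [lra|]; field_simplify; lra).
  assert (H0 : 0 <= INR i / INR q) by (unfold Rdiv; apply Rmult_le_pos;
       [apply pos_INR|apply Rlt_le, Rinv_0_lt_compat; lra]).
  rewrite plus_IZR. destruct (le_dec (q - m) i) as [Hle|Hle].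
  - apply le_INR in Hle. rewrite minus_INR in Hle by (apply INR_le; nra).
    assert (f + INR i / INR q >= 1).
    { apply Rle_ge, (Rmult_le_reg_r (INR q)); [lra|]. field_simplify; nra. }
    simpl. nra.
  - assert (Hlt : (i + m + 1 <= q)%nat) by lia. apply le_INR in Hlt.
    rewrite !plus_INR in Hlt. simpl in Hlt.
    assert (f + INR i / INR q < 1).
    { apply (Rmult_lt_reg_r (INR q)); [lra|]. field_simplify; nra. }
    simpl. lra.
Qed.

Lemma hermite_identity (x : R) (q : nat) : (1 <= q)%nat ->
  lsum (fun i => IZR (Int_part (x + INR i / INR q))) (seq 0 q) = IZR (Int_part (INR q * x)).
Proof.
  intros Hq.
  set (k := Int_part x). set (f := frac_part x).
  assert (Hx : x = IZR k + f) by (unfold f, k, frac_part; lra).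
  assert (Hf := base_fp x). fold f in Hf.
  set (mz := Int_part (INR q * f)).
  assert (Hm := base_Int_part (INR q * f)). fold mz in Hm.
  assert (Hqr : 1 <= INR q) by (apply (le_INR 1); lia).
  assert (Hmz : (0 <= mz)%Z) by (assert (-1 < mz)%Z; [apply lt_IZR; simpl; nra | lia]).
  set (m := Z.to_nat mz).
  assert (Hmm : IZR mz = INR m) by (unfold m; rewrite INR_IZR_INZ, Z2Nat.id; auto).
  rewrite Hmm in Hm.
  assert (Hmq : (m <= q)%nat) by (apply INR_le; nra).
  rewrite (lsum_ext _ (fun i => IZR k + if le_dec (q - m) i then 1 else 0)).
  2:{ intros i Hi. apply in_seq in Hi. rewrite Hx, (Int_part_add_grid k f q m i) by (lra || lia).
      rewrite plus_IZR. destruct le_dec; reflexivity. }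
  rewrite lsum_plus, lsum_const, lsum_indicator_ge, length_seq.
  replace (q - (q - m))%nat with m by lia.
  rewrite Hx, Rmult_plus_distr_l, (Rplus_comm _ (INR q * f)).
  replace (INR q * IZR k) with (IZR (Z.of_nat q * k))
      by (rewrite mult_IZR, <- INR_IZR_INZ; reflexivity).
  rewrite Int_part_shift. fold mz. rewrite plus_IZR, mult_IZR, <- INR_IZR_INZ, Hmm. lra.
Qed.

Definition grid_count (phi : R) (q : nat) (c : R) : R :=
  lsum (fun i => ind_lt (frac_part (phi + INR i / INR q)) c) (seq 0 q).

Lemma grid_count_bounds phi q c : 0 <= grid_count phi q c <= INR q.
Proof.
  unfold grid_count.
  pose proof (lsum_bounds01 (fun i => ind_lt (frac_part (phi + INR i / INR q)) c) (seq 0 q)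
    (fun i => ind_lt_bounds _ _)) as H.
  rewrite length_seq in H. exact H.
Qed.

(* Hermite's identity turns the count into a difference of two floors. *)
Lemma grid_count_approx phi q c : (1 <= q)%nat -> 0 <= c <= 1 ->
  INR q * c - 1 < grid_count phi q c < INR q * c + 1.
Proof.
  intros Hq Hc. unfold grid_count.
  rewrite (lsum_ext _ (fun i => IZR (Int_part (phi + INR i / INR q)) -
                                IZR (Int_part ((phi - c) + INR i / INR q)))).
  2:{ intros i _. rewrite ind_lt_frac_part, minus_IZR by lra. do 3 f_equal. ring. }
  rewrite lsum_minus, !hermite_identity by lia.
  replace (INR q * (phi - c)) with (INR q * phi - INR q * c) by ring.
  pose proof (base_Int_part (INR q * phi)). pose proof (base_Int_part (INR q * phi - INR q * c)).
  lra.
Qed.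

Lemma grid_count_lower phi q c : (1 <= q)%nat -> c <= 1 -> INR q * c - 1 <= grid_count phi q c.
Proof.
  intros Hq Hc. destruct (Rle_lt_dec 0 c).
  - pose proof (grid_count_approx phi q c Hq (conj r Hc)). lra.
  - pose proof (grid_count_bounds phi q c). pose proof (pos_INR q). nra.
Qed.

Lemma grid_count_upper phi q c : (1 <= q)%nat -> 0 <= c -> grid_count phi q c <= INR q * c + 1.
Proof.
  intros Hq Hc. destruct (Rle_lt_dec c 1).
  - pose proof (grid_count_approx phi q c Hq (conj Hc r)). lra.
  - pose proof (grid_count_bounds phi q c). pose proof (pos_INR q). nra.
Qed.

Definition residue (p : Z) (q n : nat) : nat := Z.to_nat ((Z.of_nat n * p) mod Z.of_nat q).

Lemma residue_permutation p q : (1 <= q)%nat -> Z.gcd p (Z.of_nat q) = 1%Z ->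
  Permutation (map (residue p q) (seq 1 q)) (seq 0 q).
Proof.
  intros Hq Hg.
  assert (H0 : (0 < Z.of_nat q)%Z) by lia.
  apply NoDup_Permutation_bis.
  - apply FinFun.Injective_map_NoDup_in; [|apply seq_NoDup].
    intros x y Hx Hy Hxy. apply in_seq in Hx, Hy. unfold residue in Hxy.
    pose proof (Z.mod_pos_bound (Z.of_nat x * p) _ H0).
    pose proof (Z.mod_pos_bound (Z.of_nat y * p) _ H0).
    apply Z2Nat.inj in Hxy; try lia.
    assert (Hd : (Z.of_nat q | p * (Z.of_nat x - Z.of_nat y))%Z).
    { rewrite Z.mul_comm, Z.mul_sub_distr_r. apply Z.mod_divide; [lia|].
      rewrite Zminus_mod, Hxy, Z.sub_diag. reflexivity. }
    apply Z.gauss in Hd; [|rewrite Z.gcd_comm; exact Hg].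
    destruct Hd as [k Hk].
    destruct (Z.eq_dec k 0) as [->|Hk0]; [lia|].
    assert (Z.abs (Z.of_nat x - Z.of_nat y) >= Z.of_nat q)%Z by (rewrite Hk, Z.abs_mul; nia).
    lia.
  - rewrite length_map, !length_seq. lia.
  - intros z Hz. apply in_map_iff in Hz. destruct Hz as [n [<- _]].
    apply in_seq. unfold residue.
    pose proof (Z.mod_pos_bound (Z.of_nat n * p) _ H0). lia.
Qed.

Lemma frac_part_residue phi p q n : (1 <= q)%nat ->
  frac_part (phi + INR n * (IZR p / INR q)) = frac_part (phi + INR (residue p q n) / INR q).
Proof.
  intros Hq. unfold residue.
  assert (H0 : (0 < Z.of_nat q)%Z) by lia.
  pose proof (Z.mod_pos_bound (Z.of_nat n * p) _ H0).
  pose proof (Z.div_mod (Z.of_nat n * p) (Z.of_nat q) ltac:(lia)) as Hdm.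
  set (m := ((Z.of_nat n * p) mod Z.of_nat q)%Z) in *.
  set (dv := ((Z.of_nat n * p) / Z.of_nat q)%Z) in *.
  assert (Hq' : IZR (Z.of_nat q) <> 0) by (apply not_0_IZR; lia).
  replace (phi + INR n * (IZR p / INR q)) with (phi + INR (Z.to_nat m) / INR q + IZR dv).
  { apply frac_part_shift. }
  rewrite !INR_IZR_INZ, Z2Nat.id by lia.
  apply (Rmult_eq_reg_r (IZR (Z.of_nat q))); [|exact Hq'].
  field_simplify; [|exact Hq'..].
  rewrite <- !mult_IZR, Rplus_assoc, <- plus_IZR. do 2 f_equal. lia.
Qed.

(* A shift by [|e| < h] moves [g] across [c] only from within [h] of [c] or of [0 = 1]. *)
Lemma ind_lt_frac_part_perturb g e c h : 0 <= g < 1 -> Rabs e < h -> h <= 1 -> 0 <= c <= 1 ->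
  ind_lt g (c - h) - ind_lt g h <= ind_lt (frac_part (g + e)) c <=
  ind_lt g (c + h) + 1 - ind_lt g (1 - h).
Proof.
  intros Hg He Hh Hc. apply Rabs_def2 in He.
  assert (F : (0 <= g + e < 1 /\ frac_part (g + e) = g + e) \/
              (1 <= g + e /\ frac_part (g + e) = g + e - 1) \/
              (g + e < 0 /\ frac_part (g + e) = g + e + 1)).
  { destruct (Rlt_le_dec (g + e) 0); [|destruct (Rlt_le_dec (g + e) 1)].
    - right; right. split; auto. rewrite (frac_part_eq _ (-1)); simpl; [ring|lra].
    - left. split; [lra|]. rewrite (frac_part_eq _ 0); simpl; [ring|lra].
    - right; left. split; auto. rewrite (frac_part_eq _ 1); simpl; [ring|lra]. }
  unfold ind_lt.
  destruct F as [[F1 F2]|[[F1 F2]|[F1 F2]]]; rewrite F2; repeat destruct Rlt_dec; lra.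
Qed.

(* [phi + n beta] is within [1/q] of the grid point [phi + (n p mod q)/q]. *)
Lemma ind_lt_rotation_bounds phi beta q p c n : (1 <= n <= q)%nat ->
  Rabs (INR q * beta - IZR p) < 1 / INR q -> 0 <= c <= 1 ->
  let g := frac_part (phi + INR (residue p q n) / INR q) in
  let h := 1 / INR q in
  ind_lt g (c - h) - ind_lt g h <= ind_lt (frac_part (phi + INR n * beta)) c <=
  ind_lt g (c + h) + 1 - ind_lt g (1 - h).
Proof.
  intros Hn Hb Hc g h.
  assert (Hqr : 1 <= INR q) by (apply (le_INR 1); lia).
  assert (Hnq : 0 <= INR n <= INR q) by (split; [apply pos_INR | apply le_INR; lia]).
  set (e := INR n * (beta - IZR p / INR q)).
  replace (phi + INR n * beta) with ((phi + INR n * (IZR p / INR q)) + e) by (unfold e; ring).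
  rewrite frac_part_frac_add, frac_part_residue by lia.
  apply ind_lt_frac_part_perturb.
  - pose proof (base_fp (phi + INR (residue p q n) / INR q)). unfold g. lra.
  - unfold e, h. replace (beta - IZR p / INR q) with ((INR q * beta - IZR p) / INR q)
      by (field; lra).
    unfold Rdiv. rewrite !Rabs_mult, Rabs_right, (Rabs_right (/ INR q))
      by (apply Rle_ge; try apply Rlt_le, Rinv_0_lt_compat; lra).
    apply Rle_lt_trans with (Rabs (INR q * beta - IZR p)); [|lra].
    pose proof (Rabs_pos (INR q * beta - IZR p)).
    apply (Rmult_le_reg_r (INR q)); [lra|]. field_simplify; nra.
  - unfold h. apply (Rmult_le_reg_r (INR q)); [lra|]. field_simplify; lra.
  - exact Hc.
Qed.

Definition rotation (beta phi : R) : nat -> R := fun n => frac_part (phi + INR n * beta).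

Lemma count_below_rotation_shift beta phi c s N :
  count_below (rotation beta phi) c s N = count_below (rotation beta (phi + INR s * beta)) c 0 N.
Proof.
  unfold count_below.
  replace (seq (S s) N) with (map (fun n => s + n)%nat (seq 1 N)).
  2:{ clear. revert s. induction N as [|N IH]; intros s; [reflexivity|].
      rewrite !seq_S, map_app, IH. simpl. do 3 f_equal. lia. }
  rewrite lsum_map. apply lsum_ext. intros i _. unfold rotation. rewrite plus_INR.
  do 2 f_equal. ring.
Qed.

(* Over one period the rotation by [beta ~ p/q] visits, up to [1/q], a permutation of the
   grid [{phi + i/q}], whose counts are exact up to [1]. *)
Lemma rotation_period_error beta phi q p c : (1 <= q)%nat -> Z.gcd p (Z.of_nat q) = 1%Z ->
  Rabs (INR q * beta - IZR p) < 1 / INR q -> 0 <= c <= 1 ->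
  Rabs (count_below (rotation beta phi) c 0 q - INR q * c) <= 4.
Proof.
  intros Hq Hg Hb Hc.
  assert (Hqr : 1 <= INR q) by (apply (le_INR 1); lia).
  set (G := fun i : nat => frac_part (phi + INR i / INR q)).
  set (h := 1 / INR q).
  assert (Hh : 0 < h <= 1).
  { unfold h. split; [apply Rdiv_lt_0_compat; lra|].
    apply (Rmult_le_reg_r (INR q)); [lra|]. field_simplify; lra. }
  assert (Hqh : INR q * h = 1) by (unfold h; field; lra).
  assert (Hpt : forall n, In n (seq 1 q) ->
    ind_lt (G (residue p q n)) (c - h) - ind_lt (G (residue p q n)) h <=
    ind_lt (frac_part (phi + INR n * beta)) c <=
    ind_lt (G (residue p q n)) (c + h) + 1 - ind_lt (G (residue p q n)) (1 - h)).
  { intros n Hn. apply in_seq in Hn. apply ind_lt_rotation_bounds; [lia | exact Hb | exact Hc]. }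
  assert (Hsum : forall F : nat -> R,
    lsum (fun n => F (residue p q n)) (seq 1 q) = lsum F (seq 0 q)).
  { intros F. rewrite <- lsum_map. apply lsum_perm, residue_permutation; assumption. }
  assert (Hlo := lsum_le _ _ _ (fun n Hn => proj1 (Hpt n Hn))).
  assert (Hhi := lsum_le _ _ _ (fun n Hn => proj2 (Hpt n Hn))).
  rewrite (Hsum (fun i => ind_lt (G i) (c - h) - ind_lt (G i) h)), lsum_minus in Hlo.
  rewrite (Hsum (fun i => ind_lt (G i) (c + h) + 1 - ind_lt (G i) (1 - h))) in Hhi.
  rewrite lsum_minus, lsum_plus, lsum_const, length_seq in Hhi.
  pose proof (grid_count_lower phi q (c - h) Hq ltac:(lra)) as G1.
  pose proof (grid_count_upper phi q h Hq ltac:(lra)) as G2.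
  pose proof (grid_count_upper phi q (c + h) Hq ltac:(lra)) as G3.
  pose proof (grid_count_lower phi q (1 - h) Hq ltac:(lra)) as G4.
  unfold grid_count in G1, G2, G3, G4. unfold G in Hlo, Hhi.
  unfold count_below, rotation. apply Rabs_le. split; nra.
Qed.

Lemma pigeonhole (f : nat -> nat) (N : nat) : (forall k, (f k < N)%nat) ->
  exists k1 k2, (k1 < k2 <= N)%nat /\ f k1 = f k2.
Proof.
  intros Hf. apply NNPP. intros Hno.
  assert (Hnd : NoDup (map f (seq 0 (S N)))).
  { apply FinFun.Injective_map_NoDup_in; [|apply seq_NoDup].
    intros x y Hx Hy Hxy. apply in_seq in Hx, Hy.
    destruct (Nat.lt_total x y) as [H|[H|H]]; auto; exfalso; apply Hno.
    - exists x, y. split; [lia|auto].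
    - exists y, x. split; [lia|auto]. }
  assert (Hinc : incl (map f (seq 0 (S N))) (seq 0 N)).
  { intros z Hz. apply in_map_iff in Hz. destruct Hz as [k [<- _]].
    apply in_seq. pose proof (Hf k). lia. }
  pose proof (NoDup_incl_length Hnd Hinc). rewrite length_map, !length_seq in H. lia.
Qed.

Lemma dirichlet_approx beta N : (1 <= N)%nat -> exists (q : nat) (p : Z),
  (1 <= q <= N)%nat /\ Rabs (INR q * beta - IZR p) < 1 / INR N.
Proof.
  intros HN.
  assert (HNr : 1 <= INR N) by (apply (le_INR 1); lia).
  set (box := fun k : nat => Int_part (INR N * frac_part (INR k * beta))).
  assert (Hbox : forall k, (0 <= box k < Z.of_nat N)%Z).
  { intros k. pose proof (base_fp (INR k * beta)).
    pose proof (base_Int_part (INR N * frac_part (INR k * beta))). unfold box. split.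
    - assert (-1 < Int_part (INR N * frac_part (INR k * beta)))%Z; [|lia].
      apply lt_IZR. simpl. nra.
    - apply lt_IZR. rewrite <- INR_IZR_INZ. nra. }
  destruct (pigeonhole (fun k => Z.to_nat (box k)) N) as [k1 [k2 [Hk Hb]]].
  { intros k. pose proof (Hbox k). lia. }
  exists (k2 - k1)%nat, (Int_part (INR k2 * beta) - Int_part (INR k1 * beta))%Z.
  split; [lia|].
  pose proof (Hbox k1). pose proof (Hbox k2).
  apply Z2Nat.inj in Hb; try lia. unfold box in Hb.
  pose proof (base_Int_part (INR N * frac_part (INR k1 * beta))).
  pose proof (base_Int_part (INR N * frac_part (INR k2 * beta))).
  rewrite Hb in H1.
  replace (INR (k2 - k1) * beta - IZR (Int_part (INR k2 * beta) - Int_part (INR k1 * beta)))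
    with (frac_part (INR k2 * beta) - frac_part (INR k1 * beta))
    by (rewrite minus_INR, minus_IZR by lia; unfold frac_part; ring).
  apply Rabs_def1; apply (Rmult_lt_reg_l (INR N)); try lra; field_simplify; lra.
Qed.

Lemma dirichlet_approx_coprime beta N : (1 <= N)%nat -> exists (q : nat) (p : Z),
  (1 <= q <= N)%nat /\ Z.gcd p (Z.of_nat q) = 1%Z /\ Rabs (INR q * beta - IZR p) < 1 / INR N.
Proof.
  intros HN. destruct (dirichlet_approx beta N HN) as [q0 [p0 [Hq0 Hb]]].
  set (g := Z.gcd p0 (Z.of_nat q0)).
  assert (Hg0 : (0 < g)%Z).
  { pose proof (Z.gcd_nonneg p0 (Z.of_nat q0)).
    destruct (Z.eq_dec g 0) as [E|]; [|lia]. apply Z.gcd_eq_0 in E. lia. }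
  destruct (Z.gcd_divide_r p0 (Z.of_nat q0)) as [qq Hqq].
  destruct (Z.gcd_divide_l p0 (Z.of_nat q0)) as [pp Hpp]. fold g in Hqq, Hpp.
  assert (Hqq0 : (1 <= qq)%Z) by nia.
  exists (Z.to_nat qq), pp. split; [|split].
  - split; [lia|]. nia.
  - rewrite Z2Nat.id by lia.
    pose proof (Z.gcd_div_gcd p0 (Z.of_nat q0) g ltac:(lia) eq_refl) as Hd.
    rewrite Hpp, Hqq, !Z.div_mul in Hd by lia. exact Hd.
  - replace (INR (Z.to_nat qq) * beta - IZR pp) with ((INR q0 * beta - IZR p0) / IZR g).
    2:{ rewrite !INR_IZR_INZ, Z2Nat.id, Hqq, Hpp, !mult_IZR by lia.
        field. apply not_0_IZR; lia. }
    assert (1 <= IZR g) by (apply IZR_le; lia).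
    unfold Rdiv at 1. rewrite Rabs_mult, (Rabs_right (/ IZR g))
      by (apply Rle_ge, Rlt_le, Rinv_0_lt_compat; lra).
    assert (0 < / IZR g <= 1) 
      by (split; [apply Rinv_0_lt_compat; lra | rewrite <- Rinv_1; apply Rinv_le_contravar; lra]).
    pose proof (Rabs_pos (INR q0 * beta - IZR p0)). nra.
Qed.

Lemma rotation_periods_error beta q p c : (1 <= q)%nat -> Z.gcd p (Z.of_nat q) = 1%Z ->
  Rabs (INR q * beta - IZR p) < 1 / INR q -> 0 <= c <= 1 ->
  forall m phi, Rabs (count_below (rotation beta phi) c 0 (m * q) - INR (m * q) * c) <= 4 * INR m.
Proof.
  intros Hq Hg Hb Hc m. induction m as [|m IH]; intros phi.
  - unfold count_below. simpl. rewrite Rmult_0_l, Rminus_0_r, Rabs_R0. lra.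
  - replace (S m * q)%nat with (q + m * q)%nat by lia.
    rewrite count_below_add, (count_below_rotation_shift beta phi c (0 + q)).
    simpl (0 + q)%nat. rewrite plus_INR, S_INR.
    pose proof (rotation_period_error beta phi q p c Hq Hg Hb Hc).
    specialize (IH (phi + INR q * beta)).
    replace (count_below (rotation beta phi) c 0 q +
             count_below (rotation beta (phi + INR q * beta)) c 0 (m * q) - (INR q + INR (m * q)) * c)
      with ((count_below (rotation beta phi) c 0 q - INR q * c) +
            (count_below (rotation beta (phi + INR q * beta)) c 0 (m * q) - INR (m * q) * c)) by ring.
    eapply Rle_trans; [apply Rabs_triang|]. lra.
Qed.

Lemma dirichlet_denominator_large beta w N q p : 0 < w -> (1 <= q <= N)%nat ->
  Rabs (INR q * beta - IZR p) >= 1 / (INR q * w) -> Rabs (INR q * beta - IZR p) < 1 / INR N ->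
  INR N < INR q * w.
Proof.
  intros Hw Hq Hgood Hb.
  assert (HNr : 1 <= INR N) by (apply (le_INR 1); lia).
  assert (Hqr : 1 <= INR q) by (apply (le_INR 1); lia).
  destruct (Rlt_le_dec (INR N) (INR q * w)) as [|Hle]; auto.
  assert (1 / INR N <= 1 / (INR q * w)).
  { unfold Rdiv. rewrite !Rmult_1_l. apply Rinv_le_contravar; [nra | exact Hle]. }
  lra.
Qed.

(* Ostrowski-type recursion: split [N = m q + r] with [m <= w] and [r < N/2]. *)
Lemma rotation_error_diophantine beta w c Nmax : 0 < w ->
  (forall q, (1 <= q <= Nmax)%nat -> forall z : Z, Rabs (INR q * beta - IZR z) >= 1 / (INR q * w)) ->
  0 <= c <= 1 ->
  forall K N phi, (N < 2 ^ K)%nat -> (N <= Nmax)%nat ->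
  Rabs (count_below (rotation beta phi) c 0 N - INR N * c) <= 4 * w * INR K.
Proof.
  intros Hw Hgood Hc K. induction K as [|K IH]; intros N phi HN HNm.
  { simpl in HN. replace N with 0%nat by lia. unfold count_below. simpl.
    rewrite Rmult_0_l, Rminus_0_r, Rabs_R0. lra. }
  destruct (Nat.eq_dec N 0) as [->|HN0].
  { unfold count_below. simpl lsum. rewrite Rmult_0_l, Rminus_0_r, Rabs_R0.
    pose proof (pos_INR (S K)). nra. }
  destruct (dirichlet_approx_coprime beta N ltac:(lia)) as [q [p [Hq [Hg Hb]]]].
  assert (HNqw := dirichlet_denominator_large beta w N q p Hw Hq (Hgood q ltac:(lia) p) Hb).
  assert (Hb' : Rabs (INR q * beta - IZR p) < 1 / INR q).
  { eapply Rlt_le_trans; [exact Hb|]. unfold Rdiv. rewrite !Rmult_1_l.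
    apply Rinv_le_contravar; [apply lt_0_INR; lia | apply le_INR; lia]. }
  set (m := (N / q)%nat). set (r := (N mod q)%nat).
  assert (Hdm : N = (m * q + r)%nat) by (unfold m, r; rewrite Nat.mul_comm; apply Nat.div_mod; lia).
  assert (Hr : (r < q)%nat) by (unfold r; apply Nat.mod_upper_bound; lia).
  assert (Hm1 : (1 <= m)%nat) by (unfold m; apply Nat.div_le_lower_bound; lia).
  assert (Hmw : INR m <= w).
  { assert (Hmq : INR m * INR q <= INR N) by (rewrite <- mult_INR; apply le_INR; lia).
    assert (0 < INR q) by (apply lt_0_INR; lia).
    apply Rmult_le_reg_r with (INR q); nra. }
  assert (Hr2 : (r < 2 ^ K)%nat) by (rewrite Nat.pow_succ_r' in HN; nia).
  rewrite Hdm, count_below_add, (count_below_rotation_shift beta phi c (0 + m * q)).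
  simpl (0 + m * q)%nat. rewrite plus_INR, S_INR.
  pose proof (rotation_periods_error beta q p c ltac:(lia) Hg Hb' Hc m phi) as H1.
  specialize (IH r (phi + INR (m * q) * beta) Hr2 ltac:(lia)).
  set (phi' := phi + INR (m * q) * beta) in *.
  replace (count_below (rotation beta phi) c 0 (m * q) + count_below (rotation beta phi') c 0 r
           - (INR (m * q) + INR r) * c)
    with ((count_below (rotation beta phi) c 0 (m * q) - INR (m * q) * c) +
          (count_below (rotation beta phi') c 0 r - INR r * c)) by ring.
  eapply Rle_trans; [apply Rabs_triang|]. lra.
Qed.

Definition dioph_weight (j : nat) : R := INR ((j + 1) ^ 2 * 2 ^ (j + 2)).

Definition diophantine_at (d : nat) (alpha : R) (j : nat) : Prop :=
  forall q, (1 <= q <= block_start (S j))%nat -> forall z : Z,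
    Rabs (INR q * (INR (block_mult d j) * alpha) - IZR z) >= 1 / (INR q * dioph_weight j).

Definition lac_frac (d : nat) (alpha : R) : nat -> R :=
  fun n => frac_part (INR (lac_seq d n) * alpha).

Definition error_bound (T J : nat) : R :=
  INR (block_start T) + 4 * dioph_weight J * INR (2 ^ (J + 1)) * INR (J + 1).

Lemma dioph_weight_ge1 j : 1 <= dioph_weight j.
Proof.
  apply (le_INR 1). pose proof (Nat.pow_nonzero (j + 1) 2 ltac:(lia)).
  pose proof (Nat.pow_nonzero 2 (j + 2) ltac:(lia)). nia.
Qed.

Lemma dioph_weight_le i j : (i <= j)%nat -> dioph_weight i <= dioph_weight j.
Proof.
  intros H. apply le_INR, Nat.mul_le_mono.
  - apply Nat.pow_le_mono_l; lia.
  - apply Nat.pow_le_mono_r; lia.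
Qed.

Lemma error_bound_ge T J : INR (block_start T) <= error_bound T J.
Proof.
  unfold error_bound. pose proof (dioph_weight_ge1 J).
  pose proof (pos_INR (2 ^ (J + 1))). pose proof (pos_INR (J + 1)).
  assert (0 <= dioph_weight J * INR (2 ^ (J + 1)) * INR (J + 1))
      by (repeat apply Rmult_le_pos; lra).
  lra.
Qed.

Lemma error_bound_step T J :
  error_bound T J + 4 * dioph_weight (S J) * INR (2 ^ (S J + 1)) <= error_bound T (S J).
Proof.
  unfold error_bound.
  assert (dioph_weight J <= dioph_weight (S J)) by (apply dioph_weight_le; lia).
  assert (INR (2 ^ (J + 1)) <= INR (2 ^ (S J + 1))) by (apply le_INR, Nat.pow_le_mono_r; lia).
  replace (INR (S J + 1)) with (INR (J + 1) + 1) by (rewrite <- S_INR; f_equal; lia).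
  pose proof (dioph_weight_ge1 J). pose proof (pos_INR (2 ^ (J + 1))). pose proof (pos_INR (J + 1)).
  assert (dioph_weight J * INR (2 ^ (J + 1)) * INR (J + 1) <=
          dioph_weight (S J) * INR (2 ^ (S J + 1)) * INR (J + 1))
    by (apply Rmult_le_compat_r; [lra|]; apply Rmult_le_compat; lra).
  nra.
Qed.

Lemma error_bound_le T i j : (i <= j)%nat -> error_bound T i <= error_bound T j.
Proof.
  induction 1; [lra|]. pose proof (error_bound_step T m).
  pose proof (dioph_weight_ge1 (S m)). pose proof (pos_INR (2 ^ (S m + 1))). nra.
Qed.

Lemma block_segment_error d alpha j c s L : diophantine_at d alpha j -> 0 <= c <= 1 ->
  (block_start j <= S s)%nat -> (s + L < block_start (S j))%nat ->
  Rabs (count_below (lac_frac d alpha) c s L - INR L * c) <= 4 * dioph_weight j * INR (2 ^ (j + 1)).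
Proof.
  intros Hg Hc H1 H2.
  set (beta := INR (block_mult d j) * alpha).
  rewrite (count_below_ext _ (rotation beta 0)).
  2:{ intros r Hr. unfold lac_frac, rotation, lac_seq.
      rewrite (block_index_eq j (s + r)) by lia.
      rewrite mult_INR. unfold beta. f_equal. ring. }
  rewrite count_below_rotation_shift.
  apply (rotation_error_diophantine beta (dioph_weight j) c (block_start (S j))).
  - pose proof (dioph_weight_ge1 j); lra.
  - intros q Hq z. apply Hg. auto.
  - exact Hc.
  - unfold block_start in *. eapply Nat.lt_le_trans with (2 ^ (2 ^ S j - 1))%nat; [lia|].
    apply Nat.pow_le_mono_r; [lia|]. rewrite Nat.add_1_r. lia.
  - lia.
Qed.

Lemma count_error_le d alpha T c : (forall j, (T <= j)%nat -> diophantine_at d alpha j) ->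
  0 <= c <= 1 -> forall J N, (N < block_start (S J))%nat ->
  Rabs (count_below (lac_frac d alpha) c 0 N - INR N * c) <= error_bound T J.
Proof.
  intros Hg Hc J. induction J as [|J IH]; intros N HN.
  - eapply Rle_trans; [apply count_below_error_le; auto|].
    eapply Rle_trans; [|apply error_bound_ge]. apply le_INR.
    pose proof (block_start_pos T). unfold block_start in HN. simpl in HN. lia.
  - destruct (Nat.lt_ge_cases N (block_start T)) as [HT|HT].
    { eapply Rle_trans; [apply count_below_error_le; auto|].
      eapply Rle_trans; [|apply error_bound_ge]. apply le_INR; lia. }
    destruct (Nat.lt_ge_cases N (block_start (S J))) as [HJ|HJ].
    { eapply Rle_trans; [apply IH; auto|]. apply error_bound_le. lia. }
    assert (HTJ : (T <= S J)%nat).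
    { destruct (Nat.le_gt_cases T (S J)); auto.
      pose proof (block_start_le (S (S J)) T ltac:(lia)). lia. }
    set (M := (block_start (S J) - 1)%nat).
    pose proof (block_start_pos (S J)).
    replace N with (M + (N - M))%nat by lia.
    rewrite count_below_add, plus_INR. simpl (0 + M)%nat.
    pose proof (IH M ltac:(lia)) as E1.
    pose proof (block_segment_error d alpha (S J) c M (N - M) (Hg _ HTJ) Hc ltac:(lia) ltac:(lia)) as E2.
    pose proof (error_bound_step T J).
    replace (count_below (lac_frac d alpha) c 0 M + count_below (lac_frac d alpha) c M (N - M) -
             (INR M + INR (N - M)) * c)
      with ((count_below (lac_frac d alpha) c 0 M - INR M * c) +
            (count_below (lac_frac d alpha) c M (N - M) - INR (N - M) * c)) by ring.
    eapply Rle_trans; [apply Rabs_triang|]. lra.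
Qed.

Lemma ln_le x y : 0 < x -> x <= y -> ln x <= ln y.
Proof. intros Hx [H|H]; [left; apply ln_increasing; auto | subst; lra]. Qed.

Lemma ln2_pos : 0 < ln 2.
Proof. rewrite <- ln_1. apply ln_increasing; lra. Qed.

Lemma ln2_le1 : ln 2 <= 1.
Proof. rewrite <- (ln_exp 1). apply ln_le; [lra|]. pose proof (exp_ineq1_le 1). lra. Qed.

Lemma Rpower_pos x y : 0 < Rpower x y.
Proof. apply exp_pos. Qed.

Lemma cube_le_quartic z : 0 <= z -> (z + 2) ^ 3 <= 64 + 8 * z ^ 4.
Proof.
  intros Hz. destruct (Rle_lt_dec z 2).
  - assert ((z + 2) ^ 3 <= 4 ^ 3) by (apply pow_incr; lra). pose proof (pow_le z 4 Hz). lra.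
  - assert ((z + 2) ^ 3 <= (2 * z) ^ 3) by (apply pow_incr; lra).
    assert (z ^ 3 <= z ^ 4) by (simpl; nra). simpl in *. nra.
Qed.

Lemma quartic_le_exp x : 0 <= x -> (x / 4) ^ 4 <= exp x.
Proof.
  intros Hx. replace (exp x) with (exp (x / 4) ^ 4).
  2:{ simpl. rewrite Rmult_1_r, <- !exp_plus. f_equal. field. }
  apply pow_incr. split; [lra|]. pose proof (exp_ineq1_le (x / 4)). lra.
Qed.

Lemma cube_le_exp a z : 0 < a -> 0 <= z -> (z + 2) ^ 3 <= (64 + 8 * (4 / a) ^ 4) * exp (a * z).
Proof.
  intros Ha Hz. pose proof (cube_le_quartic z Hz).
  pose proof (quartic_le_exp (a * z) ltac:(nra)).
  assert (1 <= exp (a * z)) by (pose proof (exp_ineq1_le (a * z)); nra).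
  assert (E : z ^ 4 = (4 / a) ^ 4 * ((a * z) / 4) ^ 4) by (field; lra).
  assert (0 <= (4 / a) ^ 4) by (apply pow_le, Rlt_le, Rdiv_lt_0_compat; lra).
  assert ((4 / a) ^ 4 * ((a * z) / 4) ^ 4 <= (4 / a) ^ 4 * exp (a * z))
    by (apply Rmult_le_compat_l; auto).
  nra.
Qed.

Lemma error_bound_succ T z :
  error_bound T (S z) = INR (block_start T) + 128 * (INR z + 2) ^ 3 * (2 ^ z) ^ 2.
Proof.
  unfold error_bound, dioph_weight. rewrite !mult_INR, !pow_INR, !plus_INR, !S_INR.
  replace (S z + 2)%nat with (z + 3)%nat by lia. replace (S z + 1)%nat with (z + 2)%nat by lia.
  rewrite !pow_add. rewrite INR_0. replace (0 + 1 + 1) with 2 by ring. ring.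
Qed.

(* [z^3 = O(2^(eps z))] *)
Lemma error_bound_le_Rpower T eps : 0 < eps ->
  exists C, forall z, error_bound T (S z) <= C * Rpower (2 ^ z) (2 + eps).
Proof.
  intros He. set (a := eps * ln 2). set (C2 := 64 + 8 * (4 / a) ^ 4).
  assert (Ha : 0 < a) by (unfold a; pose proof ln2_pos; nra).
  assert (HC2 : 0 < C2).
  { unfold C2. pose proof (pow_le (4 / a) 4 ltac:(apply Rlt_le, Rdiv_lt_0_compat; lra)). lra. }
  exists (INR (block_start T) + 128 * C2). intros z. rewrite error_bound_succ.
  set (P := 2 ^ z).
  assert (HP : 1 <= P) by (unfold P; apply pow_R1_Rle; lra).
  assert (HRP : Rpower P eps = exp (a * INR z))
      by (unfold Rpower, P, a; rewrite ln_pow by lra; f_equal; ring).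
  assert (HPe : 1 <= Rpower P eps).
  { rewrite HRP. pose proof (exp_ineq1_le (a * INR z)). pose proof (pos_INR z). nra. }
  assert (Hcube := cube_le_exp a (INR z) Ha (pos_INR z)). fold C2 in Hcube. rewrite <- HRP in Hcube.
  rewrite Rpower_plus.
  replace (Rpower P 2) with (P ^ 2) by (rewrite <- Rpower_pow by lra; f_equal; simpl; ring).
  pose proof (pos_INR (block_start T)).
  assert (HP2 : 1 <= P ^ 2) by (rewrite <- (pow1 2); apply pow_incr; lra).
  assert ((INR z + 2) ^ 3 * P ^ 2 <= C2 * (P ^ 2 * Rpower P eps))
    by (rewrite (Rmult_comm (P ^ 2)), <- Rmult_assoc; apply Rmult_le_compat_r; lra).
  assert (1 <= P ^ 2 * Rpower P eps) by nra.
  assert (INR (block_start T) <= INR (block_start T) * (P ^ 2 * Rpower P eps))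
    by (rewrite <- (Rmult_1_r (INR (block_start T))) at 1; apply Rmult_le_compat_l; lra).
  lra.
Qed.

Lemma ln_ge_block_start z N : (block_start (S z) <= N)%nat -> 2 ^ z * ln 2 <= ln (INR N).
Proof.
  intros HN. pose proof ln2_pos.
  apply Rle_trans with (ln (INR (block_start (S z)))).
  - unfold block_start. rewrite pow_INR, ln_pow by (simpl; lra).
    replace (INR 2) with 2 by (simpl; ring).
    apply Rmult_le_compat_r; [lra|].
    replace 2 with (INR 2) at 1 by reflexivity. rewrite <- pow_INR. apply le_INR.
    rewrite Nat.pow_succ_r'. pose proof (Nat.pow_nonzero 2 z ltac:(lia)). lia.
  - apply ln_le; [apply lt_0_INR; pose proof (block_start_pos (S z)); lia | apply le_INR, HN].
Qed.

Lemma error_bound_le_log T eps : 0 < eps -> exists C, forall N, (2 <= N)%nat ->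
  2 * error_bound T (block_index N) <= C * Rpower (ln (INR N)) (2 + eps).
Proof.
  intros He. destruct (error_bound_le_Rpower T eps He) as [C HC].
  pose proof ln2_pos as Hl2.
  exists (2 * C / Rpower (ln 2) (2 + eps)). intros N HN.
  destruct (block_index_spec N ltac:(lia)) as [HB1 HB2].
  destruct (block_index N) as [|z] eqn:EJ; [unfold block_start in HB2; simpl in HB2; lia|].
  assert (Hy := ln_ge_block_start z N HB1).
  assert (HP : 0 < 2 ^ z) by (apply pow_lt; lra).
  specialize (HC z). pose proof (Rpower_pos (2 ^ z) (2 + eps)).
  assert (HC0 : 0 <= C)
    by (pose proof (error_bound_ge T (S z)); pose proof (pos_INR (block_start T)); nra).
  assert (Hmono : Rpower (2 ^ z) (2 + eps) * Rpower (ln 2) (2 + eps) <=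
                 Rpower (ln (INR N)) (2 + eps)).
  { rewrite Rpower_mult_distr by lra. apply Rle_Rpower_l; [lra|]. split; [nra | exact Hy]. }
  pose proof (Rpower_pos (ln 2) (2 + eps)).
  apply Rle_trans with (2 * C * Rpower (2 ^ z) (2 + eps)); [lra|].
  apply (Rmult_le_reg_r (Rpower (ln 2) (2 + eps))); [lra|].
  field_simplify; [|lra]. nra.
Qed.

Definition covered_by (A : R -> Prop) (W : R) : Prop :=
  exists l u : nat -> R,
    (forall k, l k <= u k) /\
    (forall y, A y -> exists k, l k <= y <= u k) /\
    (forall n, sum_f_R0 (fun k => u k - l k) n <= W).

Lemma null_set_of_covered_by (S : R -> Prop) :
  (forall eps, 0 < eps -> covered_by S eps) -> null_set S.
Proof. intros H eps He. exact (H eps He). Qed.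

Lemma covered_by_mono (A B : R -> Prop) W W' :
  (forall y, A y -> B y) -> W <= W' -> covered_by B W -> covered_by A W'.
Proof.
  intros HAB HW [l [u [H1 [H2 H3]]]]. exists l, u. split; [|split]; auto.
  intros n. specialize (H3 n). lra.
Qed.

Lemma covered_by_interval a b : a <= b -> covered_by (fun y => a <= y <= b) (b - a).
Proof.
  intros Hab. exists (fun k => match k with O => a | _ => 0 end),
       (fun k => match k with O => b | _ => 0 end).
  split; [|split].
  - intros [|k]; lra.
  - intros y Hy. exists O. exact Hy.
  - intros n. induction n; simpl; lra.
Qed.

Lemma covered_by_empty : covered_by (fun _ => False) 0.
Proof.
  exists (fun _ => 0), (fun _ => 0). split; [|split].
  - intros; lra.
  - intros y [].
  - intros n. induction n; simpl; lra.
Qed.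

(* Enumerating pairs by the Cantor pairing, the first [K + 1] pairs lie in [[0, K]^2]. *)
Lemma sum_f_R0_cantor_le (g : nat -> nat -> R) K : (forall i n, 0 <= g i n) ->
  sum_f_R0 (fun k => g (fst (of_nat k)) (snd (of_nat k))) K <=
  sum_f_R0 (fun i => sum_f_R0 (g i) K) K.
Proof.
  intros Hg. rewrite !sum_f_R0_lsum, <- (lsum_map (fun p => g (fst p) (snd p)) of_nat).
  eapply Rle_trans.
  - apply (lsum_incl _ _ (list_prod (seq 0 (S K)) (seq 0 (S K)))).
    + intros [x y]; apply Hg.
    + apply FinFun.Injective_map_NoDup; [|apply seq_NoDup].
      intros a b Hab. rewrite <- (cancel_to_of a), <- (cancel_to_of b), Hab. reflexivity.
    + intros p Hp. apply in_map_iff in Hp. destruct Hp as [k [<- Hk]]. apply in_seq in Hk.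
      pose proof (to_nat_non_decreasing (fst (of_nat k)) (snd (of_nat k))).
      rewrite <- surjective_pairing, cancel_to_of in H.
      destruct (of_nat k) as [x y]. simpl in H. apply in_prod; apply in_seq; lia.
  - rewrite lsum_list_prod. apply lsum_le. intros i _. rewrite sum_f_R0_lsum. lra.
Qed.

Lemma covered_by_union (A : nat -> R -> Prop) (w : nat -> R) (W : R) :
  (forall i, covered_by (A i) (w i)) -> (forall n, sum_f_R0 w n <= W) ->
  covered_by (fun y => exists i, A i y) W.
Proof.
  intros HA HW.
  destruct (functional_choice (fun i lu => (forall k, fst lu k <= snd lu k) /\
             (forall y, A i y -> exists k, fst lu k <= y <= snd lu k) /\
             (forall n, sum_f_R0 (fun k => snd lu k - fst lu k) n <= w i))) as [F HF].
  { intros i. destruct (HA i) as [l [u H]]. exists (l, u). exact H. }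
  set (g := fun i n => snd (F i) n - fst (F i) n).
  assert (Hg : forall i n, 0 <= g i n) by (intros i n; pose proof (proj1 (HF i) n); unfold g; lra).
  exists (fun k => fst (F (fst (of_nat k))) (snd (of_nat k))),
         (fun k => snd (F (fst (of_nat k))) (snd (of_nat k))).
  split; [|split].
  - intros k. apply (proj1 (HF _)).
  - intros y [i Hy]. destruct (proj1 (proj2 (HF i)) y Hy) as [n Hn].
    exists (to_nat (i, n)). rewrite cancel_of_to. exact Hn.
  - intros K. eapply Rle_trans; [apply (sum_f_R0_cantor_le g K Hg)|].
    eapply Rle_trans; [|apply (HW K)].
    apply sum_Rle. intros i _. apply (proj2 (proj2 (HF i))).
Qed.

Lemma sum_f_R0_finite_support_le (w : nat -> R) M c : (forall k, 0 <= w k) ->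
  (forall k, (M < k)%nat -> w k = 0) -> (forall k, w k <= c) ->
  forall n, sum_f_R0 w n <= INR (S M) * c.
Proof.
  intros H0 H1 H2.
  assert (Hc : 0 <= c) by (pose proof (H0 O); pose proof (H2 O); lra).
  assert (H : forall n, sum_f_R0 w n <= INR (S (Nat.min n M)) * c).
  { induction n; [simpl; pose proof (H2 O); lra|].
    rewrite tech5. destruct (le_lt_dec (S n) M).
    - replace (Nat.min (S n) M) with (S n) by lia. replace (Nat.min n M) with n in IHn by lia.
      rewrite S_INR. pose proof (H2 (S n)). lra.
    - rewrite H1 by lia. replace (Nat.min (S n) M) with M by lia.
      replace (Nat.min n M) with M in IHn by lia. lra. }
  intros n. eapply Rle_trans; [apply H|]. apply Rmult_le_compat_r, le_INR; [auto|lia].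
Qed.

(* Such [y] lie in [M + 1] intervals of length [2 eta / M] around the points [z / M]. *)
Lemma covered_by_near_integer_multiple (m : Z) (M : nat) (eta : R) : (1 <= M)%nat -> 0 < eta <= 1 ->
  covered_by (fun y => IZR m <= y <= IZR m + 1 /\ exists z : Z, Rabs (INR M * y - IZR z) < eta)
    (4 * eta).
Proof.
  intros HM He.
  assert (HMr : 1 <= INR M) by (apply (le_INR 1); lia).
  set (ctr := fun k : nat => (INR M * IZR m + INR k) / INR M).
  set (A := fun k y => (k <= M)%nat /\ ctr k - eta / INR M <= y <= ctr k + eta / INR M).
  set (w := fun k => if le_dec k M then 2 * eta / INR M else 0).
  assert (Hw : 0 < 2 * eta / INR M) by (apply Rdiv_lt_0_compat; lra).
  apply (covered_by_mono _ (fun y => exists k, A k y) (INR (S M) * (2 * eta / INR M))).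
  - intros y [[Hy1 Hy2] [z Hz]]. apply Rabs_def2 in Hz.
    assert (Hz1 : (Z.of_nat M * m - 1 < z)%Z).
    { apply lt_IZR. rewrite minus_IZR, mult_IZR, <- INR_IZR_INZ. simpl. nra. }
    assert (Hz2 : (z < Z.of_nat M * m + Z.of_nat M + 1)%Z).
    { apply lt_IZR. rewrite !plus_IZR, mult_IZR, <- INR_IZR_INZ. simpl. nra. }
    exists (Z.to_nat (z - Z.of_nat M * m)). split; [lia|].
    replace (ctr (Z.to_nat (z - Z.of_nat M * m))) with (IZR z / INR M).
    2:{ unfold ctr. rewrite (INR_IZR_INZ (Z.to_nat _)), Z2Nat.id, minus_IZR, mult_IZR, <- INR_IZR_INZ by lia.
        f_equal. ring. }
    split; apply (Rmult_le_reg_l (INR M)); try lra; field_simplify; lra.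
  - rewrite S_INR. apply (Rmult_le_reg_l (INR M)); [lra|]. field_simplify; nra.
  - apply (covered_by_union A w).
    + intros k. unfold A, w. destruct (le_dec k M) as [Hk|Hk].
      * eapply covered_by_mono; [| |apply (covered_by_interval (ctr k - eta / INR M) (ctr k + eta / INR M))].
        -- intros y [_ Hy]. exact Hy.
        -- right. field. lra.
        -- assert (0 < eta / INR M) by (apply Rdiv_lt_0_compat; lra). lra.
      * eapply covered_by_mono; [| |apply covered_by_empty];
           [intros y [Hk' _]; contradiction | lra].
    + apply sum_f_R0_finite_support_le; intros k; unfold w; destruct le_dec; lra || lia.
Qed.

Lemma inv_le_ln_diff q : (2 <= q)%nat -> 1 / INR q <= ln (INR q) - ln (INR (q - 1)).
Proof.
  intros Hq.
  assert (Hqr : 2 <= INR q) by (apply (le_INR 2); lia).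
  rewrite minus_INR by lia. simpl (INR 1).
  assert (H : ln (1 - 1 / INR q) <= - (1 / INR q)).
  { rewrite <- (ln_exp (- (1 / INR q))). apply ln_le.
    - apply (Rmult_lt_reg_l (INR q)); [lra|]. field_simplify; lra.
    - pose proof (exp_ineq1_le (- (1 / INR q))). lra. }
  replace (1 - 1 / INR q) with ((INR q - 1) / INR q) in H by (field; lra).
  unfold Rdiv in H. rewrite ln_mult, ln_Rinv in H by (try apply Rinv_0_lt_compat; lra). lra.
Qed.

Definition harmonic_weight (B q : nat) : R :=
  if le_dec 1 q then if le_dec q B then 1 / INR q else 0 else 0.

Lemma harmonic_weight_le_ln B : (1 <= B)%nat
    -> forall n, sum_f_R0 (harmonic_weight B) n <= 1 + ln (INR B).
Proof.
  intros HB.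
  assert (H : forall n, sum_f_R0 (harmonic_weight B) n <= 1 + ln (INR (Nat.max 1 (Nat.min n B)))).
  { induction n.
    - simpl. unfold harmonic_weight. destruct le_dec; [lia|]. rewrite ln_1. lra.
    - rewrite tech5. unfold harmonic_weight at 2. destruct (le_dec 1 (S n)); [|lia].
      destruct (le_dec (S n) B).
      + destruct (Nat.eq_dec n 0) as [->|Hn0].
        * replace (Nat.max 1 (Nat.min 1 B)) with 1%nat by lia. simpl. rewrite ln_1.
          unfold harmonic_weight. destruct (le_dec 1 0); [lia|]. lra.
        * replace (Nat.max 1 (Nat.min n B)) with n in IHn by lia.
          replace (Nat.max 1 (Nat.min (S n) B)) with (S n) by lia.
          pose proof (inv_le_ln_diff (S n) ltac:(lia)).
          replace (S n - 1)%nat with n in H by lia. lra.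
      + replace (Nat.max 1 (Nat.min (S n) B)) with B by lia.
        replace (Nat.max 1 (Nat.min n B)) with B in IHn by lia. lra. }
  intros n. eapply Rle_trans; [apply H|]. apply Rplus_le_compat_l, ln_le.
  - apply lt_0_INR. lia.
  - apply le_INR. lia.
Qed.

(* [ln B_(j+1) < 2^(j+1)], so the factor [2^(j+2)] of [w_j] absorbs the harmonic sum over
   [q <= B_(j+1)]. *)
Lemma dioph_weight_harmonic_le j :
  4 / dioph_weight j * (1 + ln (INR (block_start (S j)))) <= 2 / INR ((j + 1) ^ 2).
Proof.
  assert (HlnB : ln (INR (block_start (S j))) <= INR (2 ^ S j) - 1).
  { unfold block_start. rewrite pow_INR, ln_pow by (simpl; lra).
    replace (INR 2) with 2 by (simpl; ring).
    rewrite minus_INR by (pose proof (Nat.pow_nonzero 2 (S j)); lia).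
    pose proof ln2_le1. pose proof ln2_pos.
    assert (1 <= INR (2 ^ S j)) by (apply (le_INR 1); pose proof (Nat.pow_nonzero 2 (S j)); lia).
    simpl (INR 1). nra. }
  unfold dioph_weight. rewrite mult_INR, !pow_INR. rewrite pow_INR in HlnB.
  replace (j + 2)%nat with (S (S j)) by lia. replace (j + 1)%nat with (S j) by lia.
  replace (INR 2) with 2 in * by (simpl; ring).
  assert (0 < INR (S j) ^ 2) by (apply pow_lt, lt_0_INR; lia).
  assert (0 < 2 ^ S j) by (apply pow_lt; lra).
  change (2 ^ S (S j)) with (2 * 2 ^ S j).
  apply (Rmult_le_reg_r (INR (S j) ^ 2 * (2 * 2 ^ S j))); [nra|].
  field_simplify; nra.
Qed.

Lemma covered_by_not_diophantine d (m : Z) j :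
  covered_by (fun y => IZR m <= y <= IZR m + 1 /\ ~ diophantine_at d y j) (2 / INR ((j + 1) ^ 2)).
Proof.
  set (B := block_start (S j)). set (t := block_mult d j).
  assert (HB : (1 <= B)%nat) by apply block_start_pos.
  assert (Ht : (1 <= t)%nat) by apply block_mult_pos.
  assert (Hw := dioph_weight_ge1 j).
  set (A := fun q y => (1 <= q <= B)%nat /\ IZR m <= y <= IZR m + 1 /\
                        exists z : Z, Rabs (INR (q * t) * y - IZR z) < 1 / (INR q * dioph_weight j)).
  apply (covered_by_mono _ (fun y => exists q, A q y) (4 / dioph_weight j * (1 + ln (INR B)))).
  - intros y [Hy Hng]. unfold diophantine_at in Hng.
    apply not_all_ex_not in Hng. destruct Hng as [q Hq].
    apply imply_to_and in Hq. destruct Hq as [Hq Hq'].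
    apply not_all_ex_not in Hq'. destruct Hq' as [z Hz].
    exists q. split; [exact Hq|]. split; [exact Hy|]. exists z.
    rewrite mult_INR, Rmult_assoc. apply Rnot_ge_lt. exact Hz.
  - apply dioph_weight_harmonic_le.
  - apply (covered_by_union A (fun q => harmonic_weight B q * (4 / dioph_weight j))).
    + intros q. unfold harmonic_weight.
      destruct (le_dec 1 q) as [H1|H1]; [destruct (le_dec q B) as [H2|H2]|];
        [|eapply covered_by_mono; [| |apply covered_by_empty]; [intros y [Hq _]; lia | lra]..].
      assert (1 <= INR q) by (apply (le_INR 1); lia).
      eapply covered_by_mono;
        [| |apply (covered_by_near_integer_multiple m (q * t) (1 / (INR q * dioph_weight j)))].
      * intros y [_ [Hy Hz]]. split; auto.
      * right. field. split; lra.
      * nia.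
      * split; [apply Rdiv_lt_0_compat; nra|].
        apply (Rmult_le_reg_l (INR q * dioph_weight j)); [nra|]. field_simplify; nra.
    + intros n. rewrite <- scal_sum.
      apply Rmult_le_compat_l; [apply Rlt_le, Rdiv_lt_0_compat; lra|].
      apply harmonic_weight_le_ln, HB.
Qed.

Lemma inv_sq_le_telescope n : 1 / INR ((S n + 1) ^ 2) <= 1 / INR (n + 1) - 1 / INR (S n + 1).
Proof.
  rewrite pow_INR, !plus_INR, S_INR. simpl (INR 1).
  assert (0 <= INR n) by apply pos_INR.
  apply (Rmult_le_reg_r ((INR n + 1) * (INR n + 1 + 1) ^ 2)).
  { apply Rmult_lt_0_compat; [lra|]. apply pow_lt; lra. }
  field_simplify; nra.
Qed.

Lemma inv_sq_tail_le T : (1 <= T)%nat -> forall n,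
  sum_f_R0 (fun j => if le_dec T j then 1 / INR ((j + 1) ^ 2) else 0) n <=
  (if le_dec T n then 1 / INR T - 1 / INR (n + 1) else 0).
Proof.
  intros HT n. induction n.
  - simpl. destruct le_dec; [lia|]. lra.
  - rewrite tech5. pose proof (inv_sq_le_telescope n).
    destruct (le_dec T (S n)); destruct (le_dec T n) in IHn; try lia; try lra.
    replace (INR T) with (INR (S n)) by (f_equal; lia). rewrite (Nat.add_1_r n) in H. lra.
Qed.

Definition exceptional (d : nat) (y : R) : Prop :=
  forall T, exists j, (T <= j)%nat /\ ~ diophantine_at d y j.

Lemma eventually_diophantine d y : ~ exceptional d y ->
  exists T, forall j, (T <= j)%nat -> diophantine_at d y j.
Proof.
  intros Hy. apply NNPP. intros Hno. apply Hy. intros T. apply NNPP. intros HT. apply Hno.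
  exists T. intros j Hj. apply NNPP. intros Hg. apply HT. exists j. auto.
Qed.

(* Borel-Cantelli: the levels [j >= T] already cover with total length [2 / T]. *)
Lemma covered_by_exceptional_unit d (m : Z) delta : 0 < delta ->
  covered_by (fun y => IZR m <= y <= IZR m + 1 /\ exceptional d y) delta.
Proof.
  intros Hdel.
  destruct (INR_unbounded (2 / delta)) as [T0 HT0].
  set (T := S T0).
  assert (HTr : 2 / delta < INR T) by (unfold T; rewrite S_INR; lra).
  assert (HT1 : 1 <= INR T) by (apply (le_INR 1); unfold T; lia).
  set (A := fun j y => (T <= j)%nat /\ IZR m <= y <= IZR m + 1 /\ ~ diophantine_at d y j).
  apply (covered_by_mono _ (fun y => exists j, A j y) (2 / INR T)).
  - intros y [Hy HS]. destruct (HS T) as [j [Hj Hg]]. exists j. split; auto.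
  - apply (Rmult_le_reg_r (INR T / delta)); [apply Rdiv_lt_0_compat; lra|].
    field_simplify; lra.
  - apply (covered_by_union A (fun j => (if le_dec T j then 1 / INR ((j + 1) ^ 2) else 0) * 2)).
    + intros j. unfold A. destruct (le_dec T j).
      * eapply covered_by_mono; [| |apply (covered_by_not_diophantine d m j)].
        -- intros y [_ H]. exact H.
        -- right. field. apply not_0_INR, Nat.pow_nonzero. lia.
      * eapply covered_by_mono; [| |apply covered_by_empty]; [intros y [H _]; contradiction | lra].
    + intros n. rewrite <- scal_sum. pose proof (inv_sq_tail_le T ltac:(unfold T; lia) n).
      assert (0 < 1 / INR (n + 1)) by (apply Rdiv_lt_0_compat; [lra|]; apply lt_0_INR; lia).
      assert (0 < / INR T) by (apply Rinv_0_lt_compat; lra).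
      destruct (le_dec T n); unfold Rdiv in *; lra.
Qed.

Lemma sum_geometric_half eps n : sum_f_R0 (fun i => eps / 2 ^ S i) n = eps - eps / 2 ^ S n.
Proof.
  induction n; [simpl; field|].
  rewrite tech5, IHn. simpl. field. apply pow_nonzero. lra.
Qed.

Lemma exceptional_null d : null_set (exceptional d).
Proof.
  apply null_set_of_covered_by. intros eps He.
  set (A := fun (i : nat) y => exceptional d y /\
              ((INR i <= y <= INR i + 1) \/ (- INR i - 1 <= y <= - INR i))).
  apply (covered_by_mono _ (fun y => exists i, A i y) eps).
  - intros y HS. pose proof (base_Int_part y).
    destruct (Rle_lt_dec 0 y) as [Hy|Hy].
    + assert (Hk : (0 <= Int_part y)%Z) by (assert (-1 < Int_part y)%Z;
         [apply lt_IZR; simpl; lra | lia]).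
      exists (Z.to_nat (Int_part y)). split; auto. left.
      rewrite INR_IZR_INZ, Z2Nat.id by lia. lra.
    + assert (Hk : (Int_part y < 0)%Z) by (apply lt_IZR; simpl; lra).
      exists (Z.to_nat (- Int_part y - 1)). split; auto. right.
      rewrite INR_IZR_INZ, Z2Nat.id, minus_IZR, opp_IZR by lia. simpl. lra.
  - lra.
  - apply (covered_by_union A (fun i => eps / 2 ^ S i)).
    + intros i.
      set (delta := eps / 2 ^ S (S i)).
      assert (Hdel : 0 < delta) by (apply Rdiv_lt_0_compat; [lra | apply pow_lt; lra]).
      apply (covered_by_mono _ (fun y => exists k : nat, match k with
          | O => IZR (Z.of_nat i) <= y <= IZR (Z.of_nat i) + 1 /\ exceptional d y
          | 1%nat => IZR (- Z.of_nat i - 1) <= y <= IZR (- Z.of_nat i - 1) + 1 /\ exceptional d y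
          | _ => False end) (delta + delta)).
      * intros y [HS [Hy|Hy]].
        -- exists O. rewrite <- INR_IZR_INZ. auto.
        -- exists 1%nat. rewrite minus_IZR, opp_IZR, <- INR_IZR_INZ. simpl. split; auto. lra.
      * unfold delta. simpl. right. field. apply pow_nonzero; lra.
      * apply (covered_by_union _ (fun k => match k with O => delta | 1%nat => delta | _ => 0 end)).
        -- intros [|[|k]]; [apply covered_by_exceptional_unit; auto..| apply covered_by_empty].
        -- intros [|[|n]]; simpl; try lra. clear. induction n; simpl in *; lra.
    + intros n. rewrite sum_geometric_half.
      assert (0 < eps / 2 ^ S n) by (apply Rdiv_lt_0_compat; [lra | apply pow_lt; lra]). lra.
Qed.

Theorem theorem5 :
  forall d : nat, (1 <= d)%nat ->
  exists (a : nat -> nat) (c : R),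
    (forall n, (1 <= n)%nat -> (0 < a n)%nat) /\
    (forall n, (1 <= n)%nat -> (a n < a (S n))%nat) /\
    0 < c /\
    (forall n, (1 <= n)%nat ->
       INR (a (S n)) / INR (a n) > 1 + c / Rpower (INR (a n)) (1 / INR d)) /\
    exists S : R -> Prop, null_set S /\
      forall alpha : R, ~ S alpha ->
        forall eps : R, 0 < eps ->
          exists (C : R) (N0 : nat),
            forall N : nat, (N0 <= N)%nat ->
              INR N * discrepancy (fun n => frac_part (INR (a n) * alpha)) N
                <= C * Rpower (ln (INR N)) (2 + eps).
Proof.
  intros d Hd. exists (lac_seq d), (1 / 2).
  split; [intros n Hn; apply lac_seq_pos; exact Hn|].
  split; [intros n _; apply lac_seq_lt|].
  split; [lra|].
  split; [intros n Hn; apply lac_seq_growth; auto|].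
  exists (exceptional d). split; [apply exceptional_null|].
  intros alpha Halpha eps He.
  destruct (eventually_diophantine d alpha Halpha) as [T HT].
  destruct (error_bound_le_log T eps He) as [C HC].
  exists C, 2%nat. intros N HN.
  eapply Rle_trans; [|apply HC; auto].
  apply (discrepancy_le (lac_frac d alpha)); [lia|].
  intros c Hc. apply (count_error_le d alpha T c HT Hc (block_index N) N).
  apply block_index_spec. lia.
Qed.
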